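(* Let $P \geq 3$ be an integer and $p = P!/2!$, and let $N$ be the number of positive integers $d$ such that $d(d+1)$ divides $P!$. Then for each such $d$ the three numbers $-p - 2p\left(d + \frac{1}{d}\right)$, $p + 2p\left(d + \frac{1}{d+1}\right)$, $p + 2p\left(\frac{1}{d} + \frac{d}{d+1}\right)$ are integers and $$\left\{-p - 2p\left(d + \frac{1}{d}\right)\right\}^3 + \left\{p + 2p\left(d + \frac{1}{d+1}\right)\right\}^3 + \left\{p + 2p\left(\frac{1}{d} + \frac{d}{d+1}\right)\right\}^3 = 3p^3 = 3\left(\frac{P!}{2!}\right)^3,$$ and the $N$ values of $d$ yield $N$ distinct sets of three cubes representing $3(P!/2!)^3$. Moreover, if $P \geq 5$, then $N \geq P$, so $3(P!/2!)^3$ is represented by at least $P$ distinct sets of three integer cubes. *)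

From mathcomp Require Import all_boot all_order all_algebra.
Set Implicit Arguments. Unset Strict Implicit. Unset Printing Implicit Defensive.
Import Order.TTheory GRing.Theory Num.Theory.
Local Open Scope ring_scope.

Definition pval (P : nat) : rat := (P`!)%:R / (2`!)%:R.

Definition xA (P d : nat) : rat :=
  - pval P - 2 * pval P * (d%:R + 1 / d%:R).
Definition xB (P d : nat) : rat :=
  pval P + 2 * pval P * (d%:R + 1 / (d.+1)%:R).
Definition xC (P d : nat) : rat :=
  pval P + 2 * pval P * (1 / d%:R + d%:R / (d.+1)%:R).

Definition admissible (P d : nat) : bool := (0 < d)%N && (d * d.+1 %| P`!)%N.

(* N = number of positive d with d(d+1) | P!; such d satisfy d <= P!, so
   counting over 1..P! counts all of them. *)
Definition Ncount (P : nat) : nat := count (admissible P) (iota 1 P`!).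

Definition is_int (x : rat) : Prop := exists z : int, x = z%:~R.

From mathcomp Require Import all_boot all_order all_algebra.
From mathcomp Require Import ring lra zify.
Import Order.TTheory GRing.Theory Num.Theory.
Local Open Scope ring_scope.

(* Write D = P! = 2p. The three numbers are -(p + dD + D/d), p + dD + D/(d+1)
   and p + D/d + d(D/(d+1)), integers as soon as d(d+1) | D, and the sum of
   their cubes is a rational identity in p and d. Only the first is negative,
   so two admissible d with the same set of cubes have the same first number,
   hence the same d + 1/d, hence are equal. For the count: every d < P is
   admissible since d(d+1) | (d+1)!, and for P >= 6 so is d = m^2 - 1 >= P with
   m = P/2 (rounded down), because 2d(d+1) = (m-1)m(m+1) * 2m divides (2m)!;
   for P = 5 take d = 5. *)

Lemma three_cubes_identity (F : fieldType) (p d : F) : d != 0 -> d + 1 != 0 ->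
  (- p - 2 * p * (d + 1 / d)) ^+ 3 + (p + 2 * p * (d + 1 / (d + 1))) ^+ 3
  + (p + 2 * p * (1 / d + d / (d + 1))) ^+ 3 = 3 * p ^+ 3.
Proof. by move=> d_neq0 d1_neq0; field; rewrite d_neq0 d1_neq0. Qed.

Lemma cube_inj (R : realDomainType) : injective (fun x : R => x ^+ 3).
Proof.
move=> x y /= exy.
have /eqP : (x - y) * ((2 * x + y) ^+ 2 + 3 * y ^+ 2) = 4 * (x ^+ 3 - y ^+ 3).
  by ring.
rewrite exy subrr mulr0 mulf_eq0 subr_eq0 => /orP[/eqP //|].
rewrite paddr_eq0 ?sqr_ge0 ?(mulr_ge0 _ (sqr_ge0 y)) //.
rewrite sqrf_eq0 mulf_eq0 pnatr_eq0 sqrf_eq0 /=.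
by move=> /andP[/eqP ? /eqP ?]; lra.
Qed.

Lemma addr_mul2_gt0 (R : realDomainType) (p s : R) :
  0 < p -> 0 <= s -> 0 < p + 2 * p * s.
Proof. by move=> p_gt0 s_ge0; nra. Qed.

Lemma add_invn_inj (F : numFieldType) (m n : nat) : (0 < m)%N -> (0 < n)%N ->
  m%:R + 1 / m%:R = n%:R + 1 / n%:R :> F -> m = n.
Proof.
move=> m_gt0 n_gt0 emn.
have m_neq0 : m%:R != 0 :> F by rewrite pnatr_eq0 -lt0n.
have n_neq0 : n%:R != 0 :> F by rewrite pnatr_eq0 -lt0n.
have /eqP : (m%:R - n%:R) * ((m * n)%:R - 1) = 0 :> F.
  have -> : (m%:R - n%:R) * ((m * n)%:R - 1) =
      m%:R * n%:R * ((m%:R + 1 / m%:R) - (n%:R + 1 / n%:R)) :> F.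
    by rewrite natrM; field; rewrite m_neq0 n_neq0.
  by rewrite emn subrr mulr0.
rewrite mulf_eq0 !subr_eq0 eqr_nat (eqr_nat _ _ 1) muln_eq1.
by case/orP=> [/eqP | /andP[/eqP -> /eqP ->]].
Qed.

Lemma dvdn_fact_leq (m n : nat) : (m <= n)%N -> (m`! %| n`!)%N.
Proof.
by move=> le_mn; rewrite -(ffact_fact (leq_subr m n)) subKn // dvdn_mull.
Qed.

Lemma ffact_dvdn_fact (n k : nat) : (k <= n)%N -> (n ^_ k %| n`!)%N.
Proof. by move=> le_kn; rewrite -(ffact_fact le_kn) dvdn_mulr. Qed.

Lemma pval_gt0 (P : nat) : 0 < pval P.
Proof. by rewrite /pval divr_gt0 // ltr0n fact_gt0. Qed.

Lemma two_pval (P : nat) : 2 * pval P = (P`!)%:R.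
Proof. by rewrite /pval mulrC divfK. Qed.

Lemma pval_int (P : nat) : (2 <= P)%N -> pval P \is a Num.int.
Proof. by move=> P_ge2; rewrite /pval -natq_div ?natr_int ?dvdn_fact_leq. Qed.

Section Integrality.

Variables P d : nat.
Hypothesis P_ge2 : (2 <= P)%N.

Lemma xA_int : (d %| P`!)%N -> is_int (xA P d).
Proof.
move=> dvd_d; apply/intrP.
rewrite /xA two_pval mulrDr mul1r -natq_div //.
by rewrite rpredB ?rpredN ?pval_int ?rpredD ?rpredM ?natr_int.
Qed.

Lemma xB_int : (d.+1 %| P`!)%N -> is_int (xB P d).
Proof.
move=> dvd_d1; apply/intrP.
rewrite /xB two_pval mulrDr mul1r -natq_div //.
by rewrite !rpredD ?pval_int ?rpredM ?natr_int.
Qed.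

Lemma xC_int : (d %| P`!)%N -> (d.+1 %| P`!)%N -> is_int (xC P d).
Proof.
move=> dvd_d dvd_d1; apply/intrP.
rewrite /xC two_pval mulrDr mul1r mulrCA -!natq_div //.
by rewrite !rpredD ?pval_int ?rpredM ?natr_int.
Qed.

End Integrality.

Lemma sum_cubes_xABC (P d : nat) : (0 < d)%N ->
  xA P d ^+ 3 + xB P d ^+ 3 + xC P d ^+ 3 = 3 * pval P ^+ 3.
Proof.
move=> d_gt0; rewrite /xA /xB /xC -[d.+1%:R]natr1.
by apply: three_cubes_identity; rewrite ?natr1 pnatr_eq0 // -lt0n.
Qed.

Lemma xA_lt0 (P d : nat) : xA P d < 0.
Proof.
by rewrite /xA -opprD oppr_lt0 addr_mul2_gt0 ?pval_gt0 // addr_ge0 ?divr_ge0.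
Qed.

Lemma xB_gt0 (P d : nat) : 0 < xB P d.
Proof. by rewrite /xB addr_mul2_gt0 ?pval_gt0 // addr_ge0 ?divr_ge0. Qed.

Lemma xC_gt0 (P d : nat) : 0 < xC P d.
Proof. by rewrite /xC addr_mul2_gt0 ?pval_gt0 // addr_ge0 ?divr_ge0. Qed.

Lemma xA_inj (P d1 d2 : nat) : (0 < d1)%N -> (0 < d2)%N ->
  xA P d1 = xA P d2 -> d1 = d2.
Proof.
move=> d1_gt0 d2_gt0; rewrite /xA => /addrI /oppr_inj /mulfI eq_s.
apply: (@add_invn_inj rat) => //; apply: eq_s.
by rewrite mulf_neq0 ?gt_eqF ?pval_gt0.
Qed.

Lemma cube_triples_neq (P d1 d2 : nat) : (0 < d1)%N -> (0 < d2)%N -> d1 <> d2 ->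
  ~ ([:: xA P d1 ^+ 3; xB P d1 ^+ 3; xC P d1 ^+ 3]
     =i [:: xA P d2 ^+ 3; xB P d2 ^+ 3; xC P d2 ^+ 3]).
Proof.
move=> d1_gt0 d2_gt0 neq_d eq_cubes.
have xA1_lt0 : xA P d1 ^+ 3 < 0 by rewrite exprn_odd_lt0 ?xA_lt0.
have eq_xA : xA P d1 ^+ 3 = xA P d2 ^+ 3.
  have := eq_cubes (xA P d1 ^+ 3); rewrite mem_head !inE.
  case/esym/or3P=> [/eqP // | /eqP eq_x | /eqP eq_x];
    by move: xA1_lt0; rewrite eq_x ltNge ltW ?exprn_gt0 ?xB_gt0 ?xC_gt0.
by apply: neq_d; apply: (xA_inj P _ _ d1_gt0 d2_gt0); apply: cube_inj.
Qed.

Lemma admissible_mem_iota (P d : nat) : admissible P d -> d \in iota 1 P`!.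
Proof.
case/andP=> d_gt0 dvd_dd1; rewrite mem_iota d_gt0 add1n ltnS.
by rewrite (leq_trans _ (dvdn_leq (fact_gt0 P) dvd_dd1)) ?leq_pmulr.
Qed.

Lemma Ncount_ge (P : nat) (s : seq nat) :
  uniq s -> all (admissible P) s -> (size s <= Ncount P)%N.
Proof.
move=> uniq_s /allP adm_s; rewrite /Ncount -size_filter uniq_leq_size //.
by move=> d d_s; rewrite mem_filter adm_s ?admissible_mem_iota ?adm_s.
Qed.

Lemma admissible_small (P d : nat) : (0 < d)%N -> (d < P)%N -> admissible P d.
Proof.
move=> d_gt0 lt_dP; rewrite /admissible d_gt0.
rewrite (dvdn_trans _ (dvdn_fact_leq _ _ lt_dP)) //.
by rewrite mulnC -[d in (_ * d)%N]ffactn1 -ffactSS ffact_dvdn_fact.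
Qed.

Lemma dvdn_sqr_pred_sqr_fact (m : nat) : (1 < m)%N ->
  ((m * m).-1 * (m * m) %| (m.*2)`!)%N.
Proof.
move=> m_gt1.
have double_prod : (2 * ((m * m).-1 * (m * m)) = m.+1 ^_ 3 * m.*2)%N.
  by rewrite !ffactnS ffactn0 /=; nia.
have fact_double : (m.*2)`! = (m.*2 * (m.*2).-1`!)%N.
  by case: (m) m_gt1 => // k _; rewrite doubleS factS.
rewrite (dvdn_trans (dvdn_mull 2 (dvdnn _))) // double_prod fact_double mulnC.
apply: dvdn_mul => //.
by apply: (dvdn_trans (ffact_dvdn_fact _ 3 _) (dvdn_fact_leq _ _ _)); lia.
Qed.

Lemma admissible_large (P : nat) :
  (5 <= P)%N -> exists2 d, (P <= d)%N & admissible P d.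
Proof.
move=> P_ge5; have [P_le5 | P_gt5] := leqP P 5.
  have -> : P = 5%N by apply/eqP; rewrite eqn_leq P_le5.
  by exists 5%N.
have half_bounds := odd_double_half P; set m := P./2 in half_bounds *.
exists (m * m).-1; first nia.
have sqr_m_gt0 : (0 < m * m)%N by nia.
rewrite /admissible prednK //.
by rewrite (dvdn_trans (dvdn_sqr_pred_sqr_fact m _) (dvdn_fact_leq _ P _)); lia.
Qed.

Lemma Ncount_ge_P (P : nat) : (5 <= P)%N -> (P <= Ncount P)%N.
Proof.
move=> P_ge5; have [d le_Pd adm_d] := admissible_large P P_ge5.
have := Ncount_ge P (d :: iota 1 P.-1); rewrite /= size_iota prednK; last lia.
apply; first by rewrite iota_uniq mem_iota andbT; lia.
rewrite adm_d; apply/allP=> x; rewrite mem_iota => /andP[x_gt0 lt_xP].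
by apply: admissible_small; lia.
Qed.

Theorem lemma3p4 (P : nat) (hP : (3 <= P)%N) :
  (forall d : nat, admissible P d ->
     [/\ is_int (xA P d), is_int (xB P d), is_int (xC P d) &
         xA P d ^+ 3 + xB P d ^+ 3 + xC P d ^+ 3 = 3 * pval P ^+ 3]) /\
  (forall d1 d2 : nat, admissible P d1 -> admissible P d2 -> d1 <> d2 ->
     ~ ([:: xA P d1 ^+ 3; xB P d1 ^+ 3; xC P d1 ^+ 3]
        =i [:: xA P d2 ^+ 3; xB P d2 ^+ 3; xC P d2 ^+ 3])) /\
  ((5 <= P)%N -> (P <= Ncount P)%N).
Proof.
have P_ge2 : (2 <= P)%N := ltnW hP.
split; last split; last exact: Ncount_ge_P.
- move=> d /andP[d_gt0 dvd_dd1].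
  have dvd_d : (d %| P`!)%N := dvdn_trans (dvdn_mulr _ (dvdnn d)) dvd_dd1.
  have dvd_d1 : (d.+1 %| P`!)%N := dvdn_trans (dvdn_mull _ (dvdnn _)) dvd_dd1.
  split; [exact: xA_int | exact: xB_int | exact: xC_int |].
  exact: sum_cubes_xABC.
- by move=> d1 d2 /andP[d1_gt0 _] /andP[d2_gt0 _]; apply: cube_triples_neq.
Qed.
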